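(* Let $w=w(x_1,\dots,x_n)$ be a multilinear commutator word. Assume that $T$ is a normal subgroup of a group $G$ and $a_1,\dots,a_n$ are elements of $G$ such that every element of the form $w(y_1,\dots,y_n)$ with $y_i\in a_iT$ for all $i$ has at most $m$ conjugates in $G$. Then every $w$-value of $T$ (i.e. every $w(t_1,\dots,t_n)$ with $t_i\in T$) has at most $m^{2^n}$ conjugates in $G$.
   Context: Multilinear commutator words are defined recursively: $x$ is a multilinear commutator, and if $u,v$ are multilinear commutators in disjoint sets of variables then $[u,v]$ is one. *)

From Stdlib Require Import List Arith Permutation.
Import ListNotations.

Record Group := {
  carrier :> Type;
  gmul : carrier -> carrier -> carrier;
  gone : carrier;
  ginv : carrier -> carrier;
  gmul_assoc : forall x y z, gmul x (gmul y z) = gmul (gmul x y) z;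
  gmul_1l : forall x, gmul gone x = x;
  gmul_Vl : forall x, gmul (ginv x) x = gone
}.

Arguments gmul {g}.
Arguments gone {g}.
Arguments ginv {g}.

Definition conjg {G : Group} (x g : G) : G := gmul (ginv g) (gmul x g).

Definition commg {G : Group} (x y : G) : G :=
  gmul (ginv x) (gmul (ginv y) (gmul x y)).

Definition normal_subgroup {G : Group} (T : G -> Prop) : Prop :=
  T gone /\
  (forall x y, T x -> T y -> T (gmul x y)) /\
  (forall x, T x -> T (ginv x)) /\
  (forall x g, T x -> T (conjg x g)).

Definition at_most_conjugates {G : Group} (m : nat) (x : G) : Prop :=
  exists s : list G, length s <= m /\ forall g : G, In (conjg x g) s.

Inductive cword : Type :=
| Var : nat -> cword
| Comm : cword -> cword -> cword.

Fixpoint vars (w : cword) : list nat :=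
  match w with
  | Var i => [i]
  | Comm u v => vars u ++ vars v
  end.

Fixpoint eval_word {G : Group} (w : cword) (y : nat -> G) : G :=
  match w with
  | Var i => y i
  | Comm u v => commg (eval_word u y) (eval_word v y)
  end.

(* w is a multilinear commutator word in exactly the variables x_0,...,x_{n-1}:
   each variable occurs exactly once (so the two sides of every bracket involve
   disjoint sets of variables). *)
Definition multilinear_in (w : cword) (n : nat) : Prop :=
  Permutation (vars w) (seq 0 n).

(* Let y_j ∈ T and let a lie in a set of elements closed under conjugation
   by T.  Expanding the brackets of w along the path from its root to x_j with
     [u c, d] = [u, d]^c [c, d]   and   [c, u d] = [c, u]^(d^c) [c, d]
   gives w(.., a y_j, ..) = w(z) w(.., y_j, ..), where z arises from the
   arguments (with a in position j) by conjugation with elements of T;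
   multilinearity makes the two sides of each bracket independent.
   Now if y_i ∈ T for i ≤ k and y_i ∈ a_i T for k < i < n, then with j = k
   and a = a_k this writes w(y) = w(z)^-1 w(y'), where z and y' have their
   k-th entry in a_k T as well, so by induction on k the conjugacy class of
   w(y) has at most m^(2^(k+1)) elements. *)

From Stdlib Require Import List Arith Permutation Lia.

Section GroupLaws.
Context {G : Group}.
Local Notation "x * y" := (@gmul G x y).

Lemma gmul_Vr (x : G) : x * ginv x = gone.
Proof.
  rewrite <- (gmul_1l G (x * ginv x)), <- (gmul_Vl G (ginv x)) at 1.
  rewrite <- gmul_assoc, (gmul_assoc G (ginv x)), gmul_Vl, gmul_1l.
  apply gmul_Vl.
Qed.

Lemma gmul_1r (x : G) : x * gone = x.
Proof. rewrite <- (gmul_Vl G x), gmul_assoc, gmul_Vr, gmul_1l. reflexivity. Qed.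

Lemma gmul_K (x z : G) : ginv x * (x * z) = z.
Proof. rewrite gmul_assoc, gmul_Vl, gmul_1l. reflexivity. Qed.

Lemma gmul_KV (x z : G) : x * (ginv x * z) = z.
Proof. rewrite gmul_assoc, gmul_Vr, gmul_1l. reflexivity. Qed.

Lemma ginv_unique (x y : G) : x * y = gone -> ginv x = y.
Proof. intro Hxy. rewrite <- (gmul_1r (ginv x)), <- Hxy, gmul_K. reflexivity. Qed.

Lemma ginv_mul (x y : G) : ginv (x * y) = ginv y * ginv x.
Proof.
  apply ginv_unique.
  rewrite <- gmul_assoc, (gmul_assoc G y), gmul_Vr, gmul_1l. apply gmul_Vr.
Qed.

Lemma ginv_inv (x : G) : ginv (ginv x) = x.
Proof. apply ginv_unique, gmul_Vl. Qed.

Lemma ginv_1 : ginv (@gone G) = gone.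
Proof. apply ginv_unique, gmul_1l. Qed.

End GroupLaws.

Ltac group_normalize :=
  unfold conjg, commg in *;
  repeat (rewrite <- gmul_assoc || rewrite ginv_mul || rewrite ginv_inv
          || rewrite ginv_1 || rewrite gmul_1l || rewrite gmul_1r
          || rewrite gmul_K || rewrite gmul_KV || rewrite gmul_Vr
          || rewrite gmul_Vl).

Section Conjugacy.
Context {G : Group}.
Local Notation "x * y" := (@gmul G x y).

Lemma conjg_mul (x y g : G) : conjg (x * y) g = conjg x g * conjg y g.
Proof. group_normalize. reflexivity. Qed.

Lemma conjg_inv (x g : G) : conjg (ginv x) g = ginv (conjg x g).
Proof. group_normalize. reflexivity. Qed.

Lemma commg_conjg (x y g : G) : commg (conjg x g) (conjg y g) = conjg (commg x y) g.
Proof. group_normalize. reflexivity. Qed.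

Lemma commg_mull (u c d : G) : commg (u * c) d = conjg (commg u d) c * commg c d.
Proof. group_normalize. reflexivity. Qed.

Lemma commg_mulr (c u d : G) :
  commg c (u * d) = conjg (commg c u) (conjg d c) * commg c d.
Proof. group_normalize. reflexivity. Qed.

Lemma at_most_conjugates_ginv (M : nat) (x : G) :
  at_most_conjugates M x -> at_most_conjugates M (ginv x).
Proof.
  intros [s [Hlen Hs]]. exists (map ginv s). split.
  - rewrite length_map. exact Hlen.
  - intro h. rewrite conjg_inv. apply in_map, Hs.
Qed.

Lemma at_most_conjugates_gmul (M N : nat) (x y : G) :
  at_most_conjugates M x -> at_most_conjugates N y ->
  at_most_conjugates (M * N) (x * y).
Proof.
  intros [s [Hlen Hs]] [s' [Hlen' Hs']].
  exists (map (fun p => fst p * snd p) (list_prod s s')). split.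
  - rewrite length_map, length_prod. apply Nat.mul_le_mono; assumption.
  - intro h. rewrite conjg_mul.
    apply (in_map (fun p => fst p * snd p) _ (conjg x h, conjg y h)).
    apply in_prod; auto.
Qed.

End Conjugacy.

Section NormalSubgroup.
Context {G : Group}.
Local Notation "x * y" := (@gmul G x y).
Variable T : G -> Prop.
Hypothesis HT : normal_subgroup T.

Lemma normal_gone : T gone.
Proof. apply HT. Qed.

Lemma normal_gmul (x y : G) : T x -> T y -> T (x * y).
Proof. apply HT. Qed.

Lemma normal_ginv (x : G) : T x -> T (ginv x).
Proof. apply HT. Qed.

Lemma normal_conjg (x g : G) : T x -> T (conjg x g).
Proof. apply HT. Qed.

Lemma normal_commg_l (x y : G) : T x -> T (commg x y).
Proof.
  intro Hx. replace (commg x y) with (ginv x * conjg x y)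
    by (group_normalize; reflexivity).
  apply normal_gmul; [apply normal_ginv | apply normal_conjg]; exact Hx.
Qed.

Lemma normal_commg_r (x y : G) : T y -> T (commg x y).
Proof.
  intro Hy. replace (commg x y) with (conjg (ginv y) x * y)
    by (group_normalize; reflexivity).
  apply normal_gmul; [apply normal_conjg, normal_ginv|]; exact Hy.
Qed.

Definition in_coset (a x : G) : Prop := exists t, T t /\ x = a * t.

Lemma in_coset_refl (a : G) : in_coset a a.
Proof. exists gone. split; [exact normal_gone | symmetry; apply gmul_1r]. Qed.

Lemma in_coset_conjg (a x g : G) : T g -> in_coset a x -> in_coset a (conjg x g).
Proof.
  intros Hg [t [Ht ->]]. exists (commg a g * conjg t g). split.
  - apply normal_gmul; [apply normal_commg_r | apply normal_conjg]; assumption.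
  - group_normalize. reflexivity.
Qed.

End NormalSubgroup.

Lemma NoDup_app_disjoint {A : Type} (l1 l2 : list A) :
  NoDup (l1 ++ l2) -> forall x, In x l1 -> ~ In x l2.
Proof.
  induction l1 as [|y l1 IH]; simpl; intros Hnd x Hx1 Hx2; [exact Hx1|].
  inversion Hnd as [|? ? Hy Hnd']; subst.
  destruct Hx1 as [<-|Hx1].
  - apply Hy, in_or_app; auto.
  - exact (IH Hnd' x Hx1 Hx2).
Qed.

Lemma multilinear_in_NoDup (w : cword) (n : nat) :
  multilinear_in w n -> NoDup (vars w).
Proof.
  intro Hw. apply (Permutation_NoDup (Permutation_sym Hw)), seq_NoDup.
Qed.

Lemma multilinear_in_vars (w : cword) (n k : nat) :
  multilinear_in w n -> k < n -> In k (vars w).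
Proof.
  intros Hw Hk. apply (Permutation_in _ (Permutation_sym Hw)), in_seq. lia.
Qed.

Section Words.
Context {G : Group}.

Definition update (y : nat -> G) (j : nat) (x : G) : nat -> G :=
  fun i => if Nat.eq_dec i j then x else y i.

Definition splice (l : list nat) (z y : nat -> G) : nat -> G :=
  fun i => if in_dec Nat.eq_dec i l then z i else y i.

Lemma eval_word_ext (w : cword) (y z : nat -> G) :
  (forall i, In i (vars w) -> y i = z i) -> eval_word w y = eval_word w z.
Proof.
  induction w as [k|w1 IH1 w2 IH2]; simpl; intro Hyz.
  - auto.
  - rewrite IH1, IH2; auto; intros i Hi; apply Hyz, in_or_app; auto.
Qed.

Lemma eval_word_conjg (w : cword) (y : nat -> G) (g : G) :
  eval_word w (fun i => conjg (y i) g) = conjg (eval_word w y) g.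
Proof.
  induction w as [k|w1 IH1 w2 IH2]; simpl; [reflexivity|].
  rewrite IH1, IH2. apply commg_conjg.
Qed.

Lemma eval_word_update_notin (w : cword) (y : nat -> G) (j : nat) (x : G) :
  ~ In j (vars w) -> eval_word w (update y j x) = eval_word w y.
Proof.
  intro Hj. apply eval_word_ext. intros i Hi. unfold update.
  destruct (Nat.eq_dec i j) as [->|]; [contradiction|reflexivity].
Qed.

Lemma eval_word_splice_in (w : cword) (l : list nat) (z y : nat -> G) :
  incl (vars w) l -> eval_word w (splice l z y) = eval_word w z.
Proof.
  intro Hw. apply eval_word_ext. intros i Hi. unfold splice.
  destruct (in_dec Nat.eq_dec i l); [reflexivity|]. exfalso; auto.
Qed.

Lemma eval_word_splice_out (w : cword) (l : list nat) (z y : nat -> G) :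
  (forall i, In i l -> ~ In i (vars w)) -> eval_word w (splice l z y) = eval_word w y.
Proof.
  intro Hw. apply eval_word_ext. intros i Hi. unfold splice.
  destruct (in_dec Nat.eq_dec i l) as [Hil|]; [exfalso; exact (Hw i Hil Hi)|reflexivity].
Qed.

Lemma eval_word_normal (T : G -> Prop) (HT : normal_subgroup T)
    (w : cword) (y : nat -> G) (j : nat) :
  In j (vars w) -> T (y j) -> T (eval_word w y).
Proof.
  intros Hj Hyj. induction w as [k|w1 IH1 w2 IH2]; simpl in *.
  - destruct Hj as [<-|[]]. exact Hyj.
  - apply in_app_or in Hj as [Hj|Hj].
    + apply normal_commg_l; auto.
    + apply normal_commg_r; auto.
Qed.

End Words.

Section Expansion.
Context {G : Group}.
Local Notation "x * y" := (@gmul G x y).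
Variable T : G -> Prop.
Hypothesis HT : normal_subgroup T.
Variable P : nat -> G -> Prop.
Hypothesis P_conjg : forall i x g, T g -> P i x -> P i (conjg x g).

Lemma splice_conjg_family (l : list nat) (z y : nat -> G) (j : nat) (g : G) :
  T g -> In j l -> (forall i, P i (z i)) -> (forall i, i <> j -> P i (y i)) ->
  forall i, P i (conjg (splice l z y i) g).
Proof.
  intros Hg Hjl Hz Hy i. apply P_conjg; [exact Hg|]. unfold splice.
  destruct (in_dec Nat.eq_dec i l) as [|Hil]; [apply Hz|].
  apply Hy. intros ->. contradiction.
Qed.

Lemma eval_word_update_lmul (w : cword) (j : nat) (a : G) :
  NoDup (vars w) -> In j (vars w) -> P j a ->
  forall y : nat -> G, (forall i, i <> j -> P i (y i)) -> T (y j) ->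
  exists z : nat -> G, (forall i, P i (z i)) /\
    eval_word w (update y j (a * y j)) = eval_word w z * eval_word w y.
Proof.
  intros Hnd Hj Pa. induction w as [k|w1 IH1 w2 IH2]; simpl in Hnd, Hj |- *;
    intros y Hy Hyj.
  - destruct Hj as [<-|[]]. exists (update y k a). unfold update. split.
    + intro i. destruct (Nat.eq_dec i k) as [->|Hik]; auto.
    + destruct (Nat.eq_dec k k) as [_|]; [reflexivity|contradiction].
  - pose proof (NoDup_app_remove_r _ _ Hnd) as Hnd1.
    pose proof (NoDup_app_remove_l _ _ Hnd) as Hnd2.
    pose proof (NoDup_app_disjoint _ _ Hnd) as Hdisj.
    set (c := eval_word w1 y). set (d := eval_word w2 y).
    apply in_app_or in Hj as [Hj|Hj].
    + destruct (IH1 Hnd1 Hj y Hy Hyj) as [z [Hz Heq]].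
      exists (fun i => conjg (splice (vars w1) z y i) c). split.
      { apply splice_conjg_family with j; auto.
        apply (eval_word_normal T HT w1 y j); assumption. }
      simpl. rewrite !eval_word_conjg, commg_conjg, (eval_word_splice_in w1),
        (eval_word_splice_out w2), Heq, eval_word_update_notin
        by first [apply incl_refl | intros i Hi1; exact (Hdisj i Hi1) | exact (Hdisj j Hj)].
      apply commg_mull.
    + assert (Hj1 : ~ In j (vars w1)) by (intro; eapply Hdisj; eauto).
      destruct (IH2 Hnd2 Hj y Hy Hyj) as [z [Hz Heq]].
      exists (fun i => conjg (splice (vars w2) z y i) (conjg d c)). split.
      { apply splice_conjg_family with j; auto.
        apply normal_conjg; [exact HT|].
        apply (eval_word_normal T HT w2 y j); assumption. }
      simpl. rewrite !eval_word_conjg, commg_conjg, (eval_word_splice_in w2),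
        (eval_word_splice_out w1), Heq, eval_word_update_notin
        by first [exact Hj1 | apply incl_refl | intros i Hi2 Hi1; exact (Hdisj i Hi1 Hi2)].
      apply commg_mulr.
Qed.

End Expansion.

Section CosetBound.
Context {G : Group}.
Local Notation "x * y" := (@gmul G x y).
Variable T : G -> Prop.
Hypothesis HT : normal_subgroup T.
Variables (n m : nat) (w : cword) (a : nat -> G).
Hypothesis Hw : multilinear_in w n.
Hypothesis Hcoset : forall y : nat -> G,
  (forall i, i < n -> in_coset T (a i) (y i)) ->
  at_most_conjugates m (eval_word w y).

Definition mixed_coset (k i : nat) (x : G) : Prop :=
  (i < k -> T x) /\ (k <= i < n -> in_coset T (a i) x).

Lemma mixed_coset_conjg (k i : nat) (x g : G) :
  T g -> mixed_coset k i x -> mixed_coset k i (conjg x g).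
Proof.
  intros Hg [HxT Hxa]. split; intro Hi.
  - apply normal_conjg; auto.
  - apply in_coset_conjg; auto.
Qed.

Lemma mixed_coset_bound (k : nat) : k <= n ->
  forall y : nat -> G, (forall i, mixed_coset k i (y i)) ->
  at_most_conjugates (m ^ 2 ^ k) (eval_word w y).
Proof.
  induction k as [|k IH]; intros Hk y Hy.
  - rewrite Nat.pow_0_r, Nat.pow_1_r. apply Hcoset.
    intros i Hi. apply (proj2 (Hy i)). lia.
  - assert (Hyk : T (y k)) by (apply (proj1 (Hy k)); lia).
    assert (Hy' : forall i, i <> k -> mixed_coset k i (y i)).
    { intros i Hik. destruct (Hy i) as [HyT Hya]. split; intro; [apply HyT | apply Hya]; lia. }
    assert (Hak : mixed_coset k k (a k)) by (split; [lia | intros _; apply in_coset_refl, HT]).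
    destruct (eval_word_update_lmul T HT (mixed_coset k) (mixed_coset_conjg k) w k (a k)
                (multilinear_in_NoDup w n Hw) (multilinear_in_vars w n k Hw ltac:(lia))
                Hak y Hy' Hyk) as [z [Hz Heq]].
    replace (eval_word w y)
      with (ginv (eval_word w z) * eval_word w (update y k (a k * y k)))
      by (rewrite Heq; group_normalize; reflexivity).
    rewrite Nat.pow_succ_r', Nat.mul_comm, Nat.pow_mul_r, Nat.pow_2_r.
    apply at_most_conjugates_gmul.
    + apply at_most_conjugates_ginv, IH; [lia | exact Hz].
    + apply IH; [lia|]. intro i. unfold update.
      destruct (Nat.eq_dec i k) as [->|Hik]; [|apply Hy'; exact Hik].
      split; [lia | intros _; exists (y k); auto].
Qed.

End CosetBound.

Theorem lemma3p4 (G : Group) (n m : nat) (w : cword)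
  (Hw : multilinear_in w n)
  (T : G -> Prop) (HT : normal_subgroup T) (a : nat -> G)
  (Hcoset : forall y : nat -> G,
      (forall i, i < n -> exists t, T t /\ y i = gmul (a i) t) ->
      at_most_conjugates m (eval_word w y)) :
  forall t : nat -> G, (forall i, i < n -> T (t i)) ->
    at_most_conjugates (m ^ (2 ^ n)) (eval_word w t).
Proof.
  intros t Ht. apply (mixed_coset_bound T HT n m w a Hw Hcoset n (le_n n)).
  intro i. split; [apply Ht | lia].
Qed.
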